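(* For every probabilistic algorithmic knowledge structure $N$, every agent $i$ and every formula $\phi$ containing no occurrence of any $X_j$ operator, $N\models\underline{\mathrm{Ev}}_i(\phi)=1\Rightarrow\phi$.
   Context: A derandomizer is $v=(v_1,\dots,v_n)$ with each $v_i$ a sequence of coin-toss outcomes; $V$ is the set of derandomizers. A probabilistic algorithmic knowledge structure is $N=(S,\pi,L_1,\dots,L_n,\mathtt{A}^d_1,\dots,\mathtt{A}^d_n,\nu)$ with states $S$, truth assignments $\pi(s)$ to primitive propositions, local-state functions $L_i:S\to\mathcal{L}$, deterministic functions $\mathtt{A}^d_i(\phi,\ell,s,v_i)\in\{$''Yes'',''No'',''?''$\}$, and a probability distribution $\nu$ on $V$ such that for all $i,\phi,s$ and each answer $a$, $\{v:\mathtt{A}^d_i(\phi,L_i(s),s,v_i)=a\}$ is nonempty iff it has positive $\nu$-probability. Semantics at pairs $(s,v)$: primitive propositions via $\pi$, $\neg,\wedge,\Rightarrow$ usual, $(N,s,v)\models K_i\phi$ iff $(N,t,v')\models\phi$ for all $v'\in V$ and all $t$ with $L_i(t)=L_i(s)$, $(N,s,v)\models X_i\phi$ iff $\mathtt{A}^d_i(\phi,L_i(s),s,v_i)=$''Yes'', $(N,s,v)\models\Pr(\phi)\ge\alpha$ iff $\nu(\{v':(N,s,v')\models\phi\})\ge\alpha$; $N\models\psi$ means $(N,s,v)\models\psi$ for all $s,v$. For $\phi$ with no $X_j$, write $(N,s)\models\phi$ (independent of $v$). For local state $\ell$ of agent $i$: $S_\ell=\{s:L_i(s)=\ell\}$,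 $S_{\ell,\phi}=\{s\in S_\ell:(N,s)\models\phi\}$, $S_{\ell,\neg\phi}=\{s\in S_\ell:(N,s)\models\neg\phi\}$; $\mu_{s,\phi}(\mathit{ob})=\nu(\{v':\mathtt{A}^d_i(\phi,\ell,s,v'_i)=\mathit{ob}\})$; $\mathcal{F}_{\ell,\phi}(\phi)=\{\mu_{s,\phi}:s\in S_{\ell,\phi}\}$, $\mathcal{F}_{\ell,\phi}(\neg\phi)=\{\mu_{s,\phi}:s\in S_{\ell,\neg\phi}\}$; the evidence space is $\mathcal{E}_{\mathtt{A}_i,\phi,\ell}=(\{\phi,\neg\phi\},\{$''Yes'',''No'',''?''$\},\mathcal{F}_{\ell,\phi})$. For a generalized evidence space $\mathcal{E}=(\mathcal{H},\mathcal{O},\mathcal{F})$ ($\mathcal{F}$ maps each hypothesis to a set of probability measures on $\mathcal{O}$), $\mathcal{W}_{\mathcal{E}}(\mathit{ob},h)$ is the set of values $\mu_h(\mathit{ob})/\sum_{h'\in\mathcal{H},\mathcal{F}(h')\neq\emptyset}\mu_{h'}(\mathit{ob})$ over all choices $\mu_{h'}\in\mathcal{F}(h')$ (one for each $h'$ with $\mathcal{F}(h')\ne\emptyset$, including $h$) for which the denominator is nonzero; $\underline{w}_{\mathcal{E}}(\mathit{ob},h)=\inf\mathcal{W}_{\mathcal{E}}(\mathit{ob},h)$ and $\overline{w}_{\mathcal{E}}(\mathit{ob},h)=\sup\mathcal{W}_{\mathcal{E}}(\mathit{ob},h)$, both set to $0$ if $\mathcal{W}_{\mathcal{E}}(\mathit{ob},h)=\emptyset$.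 Then $(N,s,v)\models\underline{\mathrm{Ev}}_i(\phi)=\alpha$ iff $\underline{w}_{\mathcal{E}_{\mathtt{A}_i,\phi,L_i(s)}}(\mathtt{A}^d_i(\phi,L_i(s),s,v_i),\phi)=\alpha$ (similarly with $\ge,\le$ and with $\overline{\mathrm{Ev}}_i$, $\overline{w}$). *)

From HB Require Import structures.
From mathcomp Require Import all_boot all_order all_algebra.
From mathcomp Require Import all_classical all_reals.
From mathcomp Require Import measure probability.
Set Implicit Arguments. Unset Strict Implicit. Unset Printing Implicit Defensive.
Import Order.TTheory GRing.Theory Num.Theory.
Local Open Scope classical_set_scope.
Local Open Scope ring_scope.

(** Coin-toss outcomes are booleans (heads = true); a sequence of coin-toss
    outcomes is an infinite sequence [nat -> bool]. *)
Definition coinseq := nat -> bool.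

Definition raw_derand (n : nat) := 'I_n -> coinseq.

(** Cylinder sets: fixing one coin toss of one agent. They generate the
    (product) sigma-algebra on derandomizers. *)
Definition cylinders (n : nat) : set (set (raw_derand n)) :=
  [set A | exists (i : 'I_n) (k : nat) (b : bool), A = [set v | v i k = b]].

Definition derand (n : nat) := g_sigma_algebraType (@cylinders n).

Inductive answer := Yes | No | Unknown.

Inductive pak_form (P : Type) (n : nat) (R : Type) : Type :=
| Prim of P
| Neg of pak_form P n R
| And of pak_form P n R & pak_form P n R
| Imp of pak_form P n R & pak_form P n R
| Know of 'I_n & pak_form P n R
| Xalg of 'I_n & pak_form P n R
| PrGe of pak_form P n R & R.

Arguments Prim {P n R}.
Arguments Neg {P n R}.
Arguments And {P n R}.
Arguments Imp {P n R}.
Arguments Know {P n R}.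
Arguments Xalg {P n R}.
Arguments PrGe {P n R}.

Fixpoint xfree P n R (f : pak_form P n R) : Prop :=
  match f with
  | Prim _ => True
  | Neg g => xfree g
  | And g h => xfree g /\ xfree h
  | Imp g h => xfree g /\ xfree h
  | Know _ g => xfree g
  | Xalg _ _ => False
  | PrGe g _ => xfree g
  end.

Record pak_structure (R : realType) (n : nat) (P S Lc : Type) := PAK {
  pi : S -> P -> bool;
  Loc : 'I_n -> S -> Lc;
  Ad : 'I_n -> pak_form P n R -> Lc -> S -> coinseq -> answer;
  nu : probability (derand n) R;
  Ad_meas : forall i phi s a,
    measurable [set v : derand n | Ad i phi (Loc i s) s (v i) = a];
  Ad_pos : forall i phi s a,
    [set v : derand n | Ad i phi (Loc i s) s (v i) = a] !=set0 <->
    (0 < nu [set v : derand n | Ad i phi (Loc i s) s (v i) = a])%E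
}.

Section Semantics.
Variables (R : realType) (n : nat) (P S Lc : Type).
Variable N : pak_structure R n P S Lc.

Fixpoint sat (s : S) (v : derand n) (f : pak_form P n R) : Prop :=
  match f with
  | Prim p => pi N s p
  | Neg g => ~ sat s v g
  | And g h => sat s v g /\ sat s v h
  | Imp g h => sat s v g -> sat s v h
  | Know i g => forall (t : S) (v' : derand n),
      Loc N i t = Loc N i s -> sat t v' g
  | Xalg i g => Ad N i g (Loc N i s) s (v i) = Yes
  | PrGe g a => (nu N [set v' | sat s v' g] >= a%:E)%E
  end.

(** [(N,s) |= phi] for X-free [phi] (truth is then independent of [v]). *)
Definition sat_s (s : S) (f : pak_form P n R) : Prop :=
  forall v : derand n, sat s v f.

Definition mu_s (i : 'I_n) (phi : pak_form P n R) (l : Lc) (s : S) : answer -> R :=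
  fun ob => fine (nu N [set v : derand n | Ad N i phi l s (v i) = ob]).

(** F_{l,phi}: hypotheses are encoded by [bool], [true] = phi,
    [false] = not phi. *)
Definition F_ev (i : 'I_n) (phi : pak_form P n R) (l : Lc) :
    bool -> set (answer -> R) :=
  fun h => [set mu | exists2 s : S,
    Loc N i s = l /\ (if h then sat_s s phi else sat_s s (Neg phi))
    & mu = mu_s i phi l s].

End Semantics.

(** Generalized evidence spaces with hypotheses [H] (a finite type),
    observations [O], and [F : H -> set of probability measures on O]
    (measures on the finite observation set represented by their mass
    functions). *)
Section Evidence.
Variables (R : realType) (H : finType) (O : Type).
Variable F : H -> set (O -> R).

Definition ev_denom (mu : H -> O -> R) (ob : O) : R :=
  \sum_(h' : H | `[< F h' !=set0 >]) mu h' ob.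

Definition W_ev (ob : O) (h : H) : set R :=
  [set x | exists mu : H -> O -> R,
     [/\ (forall h', F h' !=set0 -> F h' (mu h')),
         F h !=set0,
         ev_denom mu ob != 0
       & x = mu h ob / ev_denom mu ob]].

Definition w_lower (ob : O) (h : H) : R :=
  if pselect (W_ev ob h = set0) then 0 else inf (W_ev ob h).

Definition w_upper (ob : O) (h : H) : R :=
  if pselect (W_ev ob h = set0) then 0 else sup (W_ev ob h).

End Evidence.

(** Value of lower evidence Ev_i(phi) at (s, v): the formula
    [Ev_i(phi) = alpha] holds at (N,s,v) iff [ev_lower N i phi s v = alpha]. *)
Definition ev_lower (R : realType) (n : nat) (P S Lc : Type)
  (N : pak_structure R n P S Lc) (i : 'I_n) (phi : pak_form P n R)
  (s : S) (v : derand n) : R :=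
  w_lower (F_ev N i phi (Loc N i s))
          (Ad N i phi (Loc N i s) s (v i)) true.

From mathcomp Require Import all_boot all_order all_algebra.
From mathcomp Require Import all_classical all_reals.
From mathcomp Require Import measure probability.
Import Order.TTheory GRing.Theory Num.Theory.
Local Open Scope classical_set_scope.
Local Open Scope ring_scope.
Set Implicit Arguments. Unset Strict Implicit.

(** If [phi] fails at [s], then, [phi] being X-free, [mu_{s,phi}] is an
    admissible measure for the hypothesis [~ phi], and it gives the observed
    answer positive probability.  Substituting it for the [~ phi] component
    of any admissible choice adds a positive term to the denominator only,
    so some value of the evidence for [phi] is below 1, hence so is its
    infimum (and when no value exists the lower evidence is 0). *)

Section EvidenceBound.
Variables (R : realType) (H : finType) (O : Type).
Variable F : H -> set (O -> R).
Hypothesis F_ge0 : forall h m, F h m -> forall ob, 0 <= m ob.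

Lemma ev_denom_ge0 (mu : H -> O -> R) (ob : O) :
  (forall h, F h !=set0 -> F h (mu h)) -> 0 <= ev_denom F mu ob.
Proof.
by move=> muF; apply: sumr_ge0 => h /asboolP Fh; exact/F_ge0/muF.
Qed.

Lemma W_ev_ge0 (ob : O) (h : H) (x : R) : W_ev F ob h x -> 0 <= x.
Proof.
move=> [mu [muF Fh _ ->]].
by apply: divr_ge0; [exact/F_ge0/muF | exact: ev_denom_ge0].
Qed.

Lemma ev_denom_ge_pair (mu : H -> O -> R) (ob : O) (h h' : H) :
  h' != h -> (forall k, F k !=set0 -> F k (mu k)) ->
  F h !=set0 -> F h' !=set0 ->
  mu h ob + mu h' ob <= ev_denom F mu ob.
Proof.
move=> h'h muF Fh Fh'; rewrite /ev_denom (bigD1 h) ?asboolT //=.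
rewrite (bigD1 h') /=; last by rewrite h'h andbT; apply/asboolP.
rewrite addrA lerDl; apply: sumr_ge0 => k /andP[/andP[/asboolP Fk _] _].
exact/F_ge0/muF.
Qed.

Lemma W_ev_lt1 (ob : O) (h h' : H) (m' : O -> R) :
  h' != h -> F h' m' -> 0 < m' ob -> W_ev F ob h !=set0 ->
  exists2 x, W_ev F ob h x & x < 1.
Proof.
move=> h'h Fm' m'_gt0 [_ [mu0 [mu0F Fh _ _]]].
pose mu k := if k == h' then m' else mu0 k.
have muF k : F k !=set0 -> F k (mu k).
  by rewrite /mu; case: eqP => [->|_ /mu0F].
have mu_h : mu h = mu0 h by rewrite /mu eq_sym (negbTE h'h).
have mu_h' : mu h' = m' by rewrite /mu eqxx.
have mu0h_ge0 : 0 <= mu0 h ob by exact/F_ge0/mu0F.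
have den_gt : mu0 h ob < ev_denom F mu ob.
  apply: (lt_le_trans _ (ev_denom_ge_pair ob h'h muF Fh _)); last by exists m'.
  by rewrite mu_h mu_h' ltrDl.
have den_gt0 : 0 < ev_denom F mu ob by exact: le_lt_trans den_gt.
exists (mu h ob / ev_denom F mu ob).
  by exists mu; split => //; rewrite gt_eqF.
by rewrite ltr_pdivrMr // mul1r mu_h.
Qed.

Lemma w_lower_lt1 (ob : O) (h h' : H) (m' : O -> R) :
  h' != h -> F h' m' -> 0 < m' ob -> w_lower F ob h < 1.
Proof.
move=> h'h Fm' m'_gt0; rewrite /w_lower.
case: (pselect (W_ev F ob h = set0)) => [_|W_ne] /=; first exact: ltr01.
have W_nonempty : W_ev F ob h !=set0 by exact/set0P/eqP.
have [x Wx x_lt1] := W_ev_lt1 h'h Fm' m'_gt0 W_nonempty.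
have W_lbound : has_lbound (W_ev F ob h) by exists 0 => y; exact: W_ev_ge0.
exact: le_lt_trans (ge_inf W_lbound Wx) x_lt1.
Qed.

End EvidenceBound.

Section PAKStructure.
Variables (R : realType) (n : nat) (P S Lc : Type).
Variable N : pak_structure R n P S Lc.

Lemma sat_xfree_indep (f : pak_form P n R) (s : S) (v v' : derand n) :
  xfree f -> sat N s v f <-> sat N s v' f.
Proof.
elim: f => [p|g IH|g IHg h IHh|g IHg h IHh|j g _|j g _|g _ a] //=.
- by move=> xg; rewrite (IH xg).
- by move=> [xg xh]; rewrite (IHg xg) (IHh xh).
- by move=> [xg xh]; rewrite (IHg xg) (IHh xh).
Qed.

Lemma F_ev_ge0 (i : 'I_n) (phi : pak_form P n R) (l : Lc) h m :
  F_ev N i phi l h m -> forall ob, 0 <= m ob.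
Proof. by move=> [s _ ->] ob; apply/fine_ge0/measure_ge0. Qed.

Lemma F_ev_false (i : 'I_n) (phi : pak_form P n R) (s : S) (v : derand n) :
  xfree phi -> ~ sat N s v phi ->
  F_ev N i phi (Loc N i s) false (mu_s N i phi (Loc N i s) s).
Proof.
move=> xphi not_phi; exists s => //; split => // v' phi_v'.
exact/not_phi/(sat_xfree_indep s v' v xphi).
Qed.

Lemma mu_s_observed_gt0 (i : 'I_n) (phi : pak_form P n R) (s : S)
    (v : derand n) :
  0 < mu_s N i phi (Loc N i s) s (Ad N i phi (Loc N i s) s (v i)).
Proof.
apply/fine_gt0/andP; split; first by apply/(Ad_pos N i phi s _).1; exists v.
exact: le_lt_trans (probability_le1 (nu N) (Ad_meas N i phi s _)) (ltry _).
Qed.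

End PAKStructure.

Theorem proposition5p2 (R : realType) (n : nat) (P S Lc : Type)
  (N : pak_structure R n P S Lc) (i : 'I_n) (phi : pak_form P n R) :
  xfree phi ->
  forall (s : S) (v : derand n),
    ev_lower N i phi s v = 1%R -> sat N s v phi.
Proof.
move=> xphi s v ev1; apply: contrapT => not_phi.
have : ev_lower N i phi s v < 1.
  apply: (w_lower_lt1 (@F_ev_ge0 _ _ _ _ _ N i phi _) (h' := false)) => //.
    exact: F_ev_false xphi not_phi.
  exact: mu_s_observed_gt0.
by rewrite ev1 ltxx.
Qed.
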